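(* Let $S\le T_n$ be a transformation monoid and let $G\le S_n$ be a group normalizing $S$ (i.e. $g^{-1}Sg=S$ for all $g\in G$) such that $g^2=1$ for all $g\in G$. If $SG$ is intra-regular, then $S$ is intra-regular.
   Context: A transformation monoid is a subsemigroup of $T_n$ containing the identity map. $SG=\{sg:s\in S,g\in G\}$, a semigroup. A monoid $U$ is intra-regular if for every $a\in U$ there exist $b,c\in U$ with $ba^2c=a$. *)

From mathcomp Require Import all_boot all_fingroup.
Set Implicit Arguments. Unset Strict Implicit. Unset Printing Implicit Defensive.

Definition trans (n : nat) := {ffun 'I_n -> 'I_n}.

(* Product in T_n, maps acting on the right: x (f g) = (x f) g. *)
Definition tmul n (f g : trans n) : trans n := [ffun x => g (f x)].

Definition tid n : trans n := [ffun x => x].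

Definition perm_trans n (g : {perm 'I_n}) : trans n := [ffun x => g x].

Definition is_trans_monoid n (S : {set trans n}) : Prop :=
  tid n \in S /\ forall f g, f \in S -> g \in S -> tmul f g \in S.

Definition normalizes n (G : {group {perm 'I_n}}) (S : {set trans n}) : Prop :=
  forall g, g \in G ->
    [set tmul (tmul (perm_trans g^-1) s) (perm_trans g) | s in S] = S.

Definition setSG n (S : {set trans n}) (G : {group {perm 'I_n}}) : {set trans n} :=
  [set tmul s (perm_trans g) | s in S, g in G].

Definition intra_regular n (U : {set trans n}) : Prop :=
  forall a, a \in U -> exists b c, [/\ b \in U, c \in U &
    tmul (tmul (tmul b a) a) c = a].

From mathcomp Require Import all_boot all_fingroup.

(* In a finite transformation monoid intra-regularity is a rank condition:
   b a^2 c = a forces rank a^2 = rank a, so a permutes its own image and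
   some power a^(d+2) coincides with a; then a = 1 a^2 a^d inside S. *)

Section IterOnImage.

Variables (T : finType) (f : T -> T).

Lemma iter_injective_in {Y : {set T}} :
  {in Y, forall y, f y \in Y} -> {in Y &, injective f} ->
  forall k, {in Y &, injective (iter k f)}.
Proof.
move=> fY injf; have iterY k y : y \in Y -> iter k f y \in Y.
  by elim: k => [|k IHk] //= Yy; apply/fY/IHk.
elim=> [|k IHk] y z Yy Yz //= Ekyz.
by apply: IHk => //; apply: injf; rewrite ?iterY.
Qed.

Lemma iter_repeats : exists i d, forall x, iter (i + d.+1) f x = iter i f x.
Proof.
pose pw (k : 'I_#|{ffun T -> T}|.+1) : {ffun T -> T} := [ffun x => iter k f x].
have /injectivePn [i [j neq_ij Eij]] : ~~ injectiveb pw.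
  by apply/injectiveP => /leq_card; rewrite card_ord ltnn.
wlog lt_ij : i j neq_ij Eij / i < j.
  move=> W; case: (ltngtP i j) => [|gt_ij|/val_inj eq_ij]; first exact: W.
    by apply: (W j i); rewrite 1?eq_sym.
  by rewrite eq_ij eqxx in neq_ij.
exists i, (j - i.+1) => x; rewrite addnS -addSn subnKC //.
by have := congr1 (fun h : {ffun T -> T} => h x) Eij; rewrite !ffunE.
Qed.

Lemma iter_image_periodic :
  {in f @: [set: T] &, injective f} -> exists d, forall x, f x = iter d.+2 f x.
Proof.
move=> injf; set Y := f @: [set: T].
have fY : {in Y, forall y, f y \in Y} by move=> y _; rewrite imset_f.
have [i [d Eid]] := iter_repeats; exists d => x.
apply: (iter_injective_in fY injf i); try exact: imset_f.
by rewrite [iter d.+2 f x]iterSr -iterD Eid.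
Qed.

End IterOnImage.

Arguments iter_image_periodic {T f}.

Lemma intra_injective_on_image {n} {a b c : trans n} :
  tmul (tmul (tmul b a) a) c = a -> {in a @: [set: 'I_n] &, injective a}.
Proof.
move=> Ea; set Y := a @: [set: 'I_n]; apply/imset_injP.
have sub_Y : Y \subset c @: (a @: Y).
  apply/subsetP=> _ /imsetP [z _ ->].
  by rewrite -{1}Ea !ffunE !imset_f ?in_setT.
rewrite eqn_leq leq_imset_card /=.
exact: leq_trans (subset_leq_card sub_Y) (leq_imset_card _ _).
Qed.

Definition tpow {n} (a : trans n) (k : nat) : trans n := [ffun x => iter k a x].

Lemma tpow_in_monoid {n} {S : {set trans n}} {a} k :
  is_trans_monoid S -> a \in S -> tpow a k \in S.
Proof.
move=> [S1 SM] Sa; elim: k => [|k IHk].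
  by rewrite (_ : tpow a 0 = tid n) //; apply/ffunP=> x; rewrite !ffunE.
rewrite (_ : tpow a k.+1 = tmul (tpow a k) a) ?SM //.
by apply/ffunP=> x; rewrite !ffunE.
Qed.

Lemma mem_setSG {n} {S : {set trans n}} (G : {group {perm 'I_n}}) {a} :
  a \in S -> a \in setSG S G.
Proof.
move=> Sa; apply/imset2P; exists a 1%g => //.
by apply/ffunP=> x; rewrite !ffunE perm1.
Qed.

Lemma tmul_sq_tpow {n} {a : trans n} {d} :
  (forall x, a x = iter d.+2 a x) -> tmul (tmul (tmul (tid n) a) a) (tpow a d) = a.
Proof. by move=> Ea; apply/ffunP=> x; rewrite !ffunE [RHS]Ea !iterSr. Qed.

Theorem proposition4p7 (n : nat) (S : {set trans n}) (G : {group {perm 'I_n}}) :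
  is_trans_monoid S ->
  normalizes G S ->
  (forall g, g \in G -> (g * g = 1)%g) ->
  intra_regular (setSG S G) ->
  intra_regular S.
Proof.
move=> monoS _ _ irSG a Sa.
have [b [c [_ _ Ea]]] := irSG a (mem_setSG G Sa).
have [d Ead] := iter_image_periodic (intra_injective_on_image Ea).
exists (tid n), (tpow a d); split; first by case: monoS.
  exact: tpow_in_monoid.
exact: tmul_sq_tpow.
Qed.
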